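(* In a RiFle assignment game, the set of stable payoffs (viewed as a subset of $\mathbb R^n\times\mathbb R^n$) is compact.
   Context: A RiFle assignment game consists of two disjoint sets of agents $P=\{p_1,\dots,p_n\}$ and $Q=\{q_1,\dots,q_n\}$, a pair of nonnegative real numbers $(\beta_{ij},\gamma_{ij})$ for every pair $(p_i,q_j)\in P\times Q$ (write $\alpha_{ij}=\beta_{ij}+\gamma_{ij}$), and a designation of every agent as rigid or flexible. Let $\mathcal R$ be the set of pairs with at least one rigid agent and $\mathcal F$ the set of pairs with both agents flexible. An outcome $(\bar u,\bar v;\mu)$ consists of a matching $\mu$ between $P$ and $Q$ (write $p_i\stackrel{\mu}{\longleftrightarrow} q_j$) and payoff vectors $\bar u,\bar v\in\mathbb R^n$. It is feasible if: (1) $u_i\ge0$, $v_j\ge0$; (2) if a rigid $p_i$ is matched to $q_j$ then $u_i=\beta_{ij}$ and, if $q_j$ is flexible, $v_j\ge\gamma_{ij}$; symmetrically for a rigid $q_j$ matched to $p_i$: $v_j=\gamma_{ij}$ and, if $p_i$ is flexible, $u_i\ge\beta_{ij}$; (3) $\sum_iu_i+\sum_jv_j=\sum_{p_i\stackrel{\mu}{\longleftrightarrow}q_j}\alpha_{ij}$. It is stable if feasible and $u_i+v_j\ge\alpha_{ij}$ for $(p_i,q_j)\in\mathcal F$ and ($u_i\ge\beta_{ij}$ or $v_j\ge\gamma_{ij}$) for $(p_i,q_j)\in\mathcal R$. A payoff $(\bar u,\bar v)$ is stable if $(\bar u,\bar v;\mu)$ is a stable outcome for some matching $\mu$. *)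

From HB Require Import structures.
From mathcomp Require Import all_boot all_order all_algebra all_fingroup.
From mathcomp Require Import all_classical all_reals all_analysis.
Set Implicit Arguments. Unset Strict Implicit. Unset Printing Implicit Defensive.
Import Order.TTheory GRing.Theory Num.Theory.
Local Open Scope ring_scope.
Local Open Scope classical_set_scope.

(* A RiFle assignment game with agents p_1..p_n (indexed by 'I_n) and q_1..q_n (indexed by 'I_n). *)
Record rifle_game (R : realType) (n : nat) := RiFle {
  beta : 'I_n -> 'I_n -> R;
  gamma : 'I_n -> 'I_n -> R;
  beta_ge0 : forall i j, 0 <= beta i j;
  gamma_ge0 : forall i j, 0 <= gamma i j;
  rigidP : 'I_n -> bool;
  rigidQ : 'I_n -> bool
}.

Definition alpha (R : realType) (n : nat) (G : rifle_game R n) (i j : 'I_n) : R :=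
  beta G i j + gamma G i j.

(* pair (p_i, q_j) is in F iff both are flexible; otherwise it is in R *)
Definition flexible_pair (R : realType) (n : nat) (G : rifle_game R n) (i j : 'I_n) : bool :=
  ~~ rigidP G i && ~~ rigidQ G j.

(* A matching between P and Q is a bijection mu : p_i <-> q_(mu i). *)
Definition feasible (R : realType) (n : nat) (G : rifle_game R n)
    (u v : 'rV[R]_n) (mu : {perm 'I_n}) : Prop :=
  [/\ (forall i, 0 <= u ord0 i) /\ (forall j, 0 <= v ord0 j),
      (forall i, rigidP G i ->
         u ord0 i = beta G i (mu i) /\
         (~~ rigidQ G (mu i) -> gamma G i (mu i) <= v ord0 (mu i))),
      (forall i, rigidQ G (mu i) ->
         v ord0 (mu i) = gamma G i (mu i) /\
         (~~ rigidP G i -> beta G i (mu i) <= u ord0 i)) &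
      \sum_(i < n) u ord0 i + \sum_(j < n) v ord0 j = \sum_(i < n) alpha G i (mu i)].

Definition stable (R : realType) (n : nat) (G : rifle_game R n)
    (u v : 'rV[R]_n) (mu : {perm 'I_n}) : Prop :=
  feasible G u v mu /\
  forall i j,
    (flexible_pair G i j -> alpha G i j <= u ord0 i + v ord0 j) /\
    (~~ flexible_pair G i j -> beta G i j <= u ord0 i \/ gamma G i j <= v ord0 j).

Definition stable_payoffs (R : realType) (n : nat) (G : rifle_game R n)
  : set ('rV[R]_n * 'rV[R]_n) :=
  [set uv | exists mu : {perm 'I_n}, stable G uv.1 uv.2 mu].

(* Payoffs of a feasible outcome are nonnegative and add up to the value of the matching, so
   every stable payoff lies in the compact box [0, M]^n x [0, M]^n with M = sum_(i,j) alpha_ij.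
   For a fixed matching mu, every condition defining stability is a non-strict inequality (or
   equality, or disjunction of two inequalities) between continuous functions of the payoff, so
   the stable payoffs supported by mu form a closed set; there are finitely many matchings. *)
From HB Require Import structures.
From mathcomp Require Import all_boot all_order all_algebra all_fingroup.
From mathcomp Require Import all_classical all_reals all_analysis.

Import numFieldNormedType.Exports.
Import Order.TTheory GRing.Theory Num.Theory.
Local Open Scope ring_scope.
Local Open Scope classical_set_scope.

Lemma ler_sum_nonneg_term {R : numDomainType} {I : finType} {F : I -> R} (k : I) :
  (forall i, 0 <= F i) -> F k <= \sum_i F i.
Proof. by move=> F_ge0; rewrite (bigD1 k) //= lerDl sumr_ge0. Qed.

Lemma continuous_sum (T : topologicalType) (R : numFieldType) (I : Type) (r : seq I)
    (f : I -> T -> R) :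
  (forall i, continuous (f i)) -> continuous (fun x => \sum_(i <- r) f i x).
Proof.
move=> fC; elim: r => [|a r IHr].
  by under eq_fun do rewrite big_nil; exact: cst_continuous.
by under eq_fun do rewrite big_cons; move=> x; apply: continuousD; [exact: fC | exact: IHr].
Qed.

Section closure_inequalities.
Context {T : topologicalType} {R : realType}.
Implicit Types (A C : set T) (f g : T -> R).

Lemma closed_le_continuous {f g} : continuous f -> continuous g ->
  closed [set x | f x <= g x].
Proof.
move=> fC gC; rewrite (_ : mkset _ = (g - f) @^-1` [set y | 0 <= y]).
  apply: preimage_closed (@closed_ge _ 0) => x _.
  by apply: continuousB; [exact: gC | exact: fC].
by apply/seteqP; split => x /=; rewrite subr_ge0.
Qed.

Lemma closure_min {A C} : closed C -> A `<=` C -> closure A `<=` C.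
Proof. by move=> cC AC; rewrite closureE; exact: smallest_sub. Qed.

Lemma subclosure_closed A : closure A `<=` A -> closed A.
Proof. by move=> clA; apply/closure_id/seteqP; split => //; exact: subset_closure. Qed.

Context {A : set T} {x : T}.
Hypothesis Ax : closure A x.

Lemma closure_le {f g} : continuous f -> continuous g ->
  (forall y, A y -> f y <= g y) -> f x <= g x.
Proof.
by move=> fC gC le_fg; exact: closure_min (closed_le_continuous fC gC) le_fg _ Ax.
Qed.

Lemma closure_eq {f g} : continuous f -> continuous g ->
  (forall y, A y -> f y = g y) -> f x = g x.
Proof.
move=> fC gC eq_fg; apply/le_anti/andP; split.
  by apply: closure_le => // y /eq_fg ->.
by apply: closure_le => // y /eq_fg ->.
Qed.

Lemma closure_le_or {f g f' g'} : continuous f -> continuous g ->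
  continuous f' -> continuous g' ->
  (forall y, A y -> f y <= g y \/ f' y <= g' y) -> f x <= g x \/ f' x <= g' x.
Proof.
move=> fC gC f'C g'C le_fg.
have closed_or := closedU (closed_le_continuous fC gC) (closed_le_continuous f'C g'C).
exact: closure_min closed_or le_fg _ Ax.
Qed.

End closure_inequalities.

Section rifle_game_payoffs.
Context {R : realType} {n : nat} (G : rifle_game R n).
Notation payoff := ('rV[R]_n * 'rV[R]_n)%type.

Lemma continuous_fst_entry i : continuous (fun uv : payoff => uv.1 ord0 i).
Proof.
move=> uv; apply: (continuous_comp (f := fst) (g := fun w : 'rV[R]_n => w ord0 i)).
  exact: cvg_fst.
exact: coord_continuous.
Qed.

Lemma continuous_snd_entry j : continuous (fun uv : payoff => uv.2 ord0 j).
Proof.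
move=> uv; apply: (continuous_comp (f := snd) (g := fun w : 'rV[R]_n => w ord0 j)).
  exact: cvg_snd.
exact: coord_continuous.
Qed.

Lemma alpha_ge0 i j : 0 <= alpha G i j.
Proof. by rewrite addr_ge0 ?beta_ge0 ?gamma_ge0. Qed.

Definition payoff_bound := \sum_i \sum_j alpha G i j.

Definition payoff_box := [set w : 'rV[R]_n | forall i, `[0, payoff_bound]%classic (w ord0 i)].

Lemma compact_payoff_box : compact payoff_box.
Proof.
apply: (@rV_compact R n (fun=> `[0, payoff_bound]%classic)) => i.
exact: segment_compact.
Qed.

Lemma feasible_payoff_box u v mu : feasible G u v mu -> payoff_box u /\ payoff_box v.
Proof.
move=> [[u_ge0 v_ge0] _ _ sum_uv].
have le_sum_bound : \sum_i u ord0 i + \sum_j v ord0 j <= payoff_bound.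
  rewrite sum_uv; apply: ler_sum => i _.
  exact: ler_sum_nonneg_term (alpha_ge0 i).
have sum_u_ge0 : 0 <= \sum_i u ord0 i by exact: sumr_ge0.
have sum_v_ge0 : 0 <= \sum_j v ord0 j by exact: sumr_ge0.
split => i /=; rewrite in_itv /= ?u_ge0 ?v_ge0 /=; apply: le_trans le_sum_bound.
  apply: le_trans (ler_sum_nonneg_term i u_ge0) _; by rewrite lerDl.
apply: le_trans (ler_sum_nonneg_term i v_ge0) _; by rewrite lerDr.
Qed.

Definition feasible_set mu := [set uv : payoff | feasible G uv.1 uv.2 mu].

Definition unblocked_set := [set uv : payoff | forall i j,
  (flexible_pair G i j -> alpha G i j <= uv.1 ord0 i + uv.2 ord0 j) /\
  (~~ flexible_pair G i j -> beta G i j <= uv.1 ord0 i \/ gamma G i j <= uv.2 ord0 j)].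

Lemma stable_payoffsE :
  stable_payoffs G = \bigcup_(mu in [set: {perm 'I_n}]) (feasible_set mu `&` unblocked_set).
Proof. by apply/seteqP; split => uv [mu]; [exists mu | move=> _; exists mu]. Qed.

Let uC := continuous_fst_entry.
Let vC := continuous_snd_entry.
Let cC {c : R} : continuous (fun _ : payoff => c). Proof. exact: cst_continuous. Qed.

Lemma closed_feasible_set mu : closed (feasible_set mu).
Proof.
apply: subclosure_closed => uv cl_uv.
have sumC : continuous (fun uv : payoff => \sum_i uv.1 ord0 i + \sum_j uv.2 ord0 j).
  by move=> ?; apply: continuousD; apply: continuous_sum.
split; first split.
- by move=> i; apply: (closure_le cl_uv cC (uC i)) => ? [[? _] _ _ _].
- by move=> j; apply: (closure_le cl_uv cC (vC j)) => ? [[_ ?] _ _ _].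
- move=> i rigid_i; split => [|flex_mui].
    by apply: (closure_eq cl_uv (uC i) cC) => ? [_ /(_ i rigid_i) [-> _] _ _].
  by apply: (closure_le cl_uv cC (vC (mu i))) => ? [_ /(_ i rigid_i) [_ /(_ flex_mui)]].
- move=> i rigid_mui; split => [|flex_i].
    by apply: (closure_eq cl_uv (vC (mu i)) cC) => ? [_ _ /(_ i rigid_mui) [-> _] _].
  by apply: (closure_le cl_uv cC (uC i)) => ? [_ _ /(_ i rigid_mui) [_ /(_ flex_i)]].
- by apply: (closure_eq cl_uv sumC cC) => ? [].
Qed.

Lemma closed_unblocked_set : closed unblocked_set.
Proof.
apply: subclosure_closed => uv cl_uv.
move=> i j; split => [flex_ij|rigid_ij].
  have uvC : continuous (fun uv : payoff => uv.1 ord0 i + uv.2 ord0 j).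
    by move=> ?; apply: continuousD; [exact: uC | exact: vC].
  by apply: (closure_le cl_uv cC uvC) => ? /(_ i j) [/(_ flex_ij)].
by apply: (closure_le_or cl_uv cC (uC i) cC (vC j)) => ? /(_ i j) [_ /(_ rigid_ij)].
Qed.

End rifle_game_payoffs.

Theorem lemma4 (R : realType) (n : nat) (G : rifle_game R n) :
  compact (stable_payoffs G).
Proof.
have stable_in_box : stable_payoffs G `<=` payoff_box G `*` payoff_box G.
  by move=> [u v] [mu [/feasible_payoff_box]].
apply: subclosed_compact stable_in_box; last first.
  by apply: compact_setX; exact: compact_payoff_box.
rewrite stable_payoffsE; apply: closed_bigcup => [|mu _]; first exact: finite_finset.
exact: closedI (closed_feasible_set G mu) (closed_unblocked_set G).
Qed.
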